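(* Let $\theta=\sqrt{b/a}>1$ with $a,b$ coprime positive integers, $\theta\notin\mathbb{Q}$. Let $\varepsilon>\eta>0$ and suppose the open interval $\,]2\sqrt{ab}\,\theta^{-2}\eta,\ 2\sqrt{ab}\,\theta^{-2}\varepsilon[\,$ contains $|m|$ for some integer $m$ such that the equation $ax^2-by^2=m$ has a primitive integer solution (i.e. with $\gcd(x,y)=1$). Then there exists a sequence $B_n\to\infty$ with $$\delta_{\theta,B_n,1/2}(\chi_{\varepsilon,\eta})\ge1\quad\text{for all }n\ge1.$$
   Context: On $\mathbb{P}^1(\mathbb{Q})$ use $H([u:v])=\max(|u|,|v|)$ with $u,v$ coprime integers. For real $\theta$, $r>0$, $B>0$ and compactly supported $f$ on $\mathbb{R}$, $\delta_{\theta,B,r}(f)=\sum_{[u:v]\in\mathbb{P}^1(\mathbb{Q}),v\ne0,H([u:v])\le B}f(B^{1/r}(u/v-\theta))$. For $\varepsilon>\eta\ge0$, $\chi_{\varepsilon,\eta}$ is the indicator of $\{t:\eta<|t|\le\varepsilon\}$. *)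

From Stdlib Require Import Reals Lra Lia ZArith List.
Open Scope R_scope.

Definition height (u v : Z) : R := Rmax (IZR (Z.abs u)) (IZR (Z.abs v)).

(* Each point [u:v] of P^1(Q) with v <> 0 has a unique representative
   (u,v) with gcd(u,v)=1 and v > 0.  We enumerate a box containing all
   such representatives of height <= B and keep those of height <= B. *)
Definition box (K : Z) : list (Z * Z) :=
  list_prod (map (fun k => (k - K)%Z) (map Z.of_nat (seq 0 (Z.to_nat (2 * K + 1)))))
            (map (fun k => (k + 1)%Z) (map Z.of_nat (seq 0 (Z.to_nat K)))).

Definition rat_points (B : R) : list (Z * Z) :=
  filter (fun p => andb (Z.eqb (Z.gcd (fst p) (snd p)) 1)
                        (if Rle_dec (height (fst p) (snd p)) B then true else false))
         (box (up B)).

Definition delta (theta B r : R) (f : R -> R) : R :=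
  fold_right Rplus 0
    (map (fun p => f (Rpower B (1 / r) * (IZR (fst p) / IZR (snd p) - theta)))
         (rat_points B)).

Definition chi (eps eta : R) (t : R) : R :=
  if Rlt_dec eta (Rabs t) then (if Rle_dec (Rabs t) eps then 1 else 0) else 0.

(* Write th = sqrt (b/a).  A primitive solution of a x^2 - b y^2 = m is a rational x/y
   with (x - th y)(x + th y) = m/a.  Since a b is not a square, the Pell equation
   X^2 - a b Y^2 = 1 has a nontrivial solution, and multiplying x sqrt a + y sqrt b by
   the powers of the unit X + Y sqrt (a b) gives infinitely many primitive solutions
   with y -> oo, hence x - th y -> 0.  For each of them choose B with
   B^2 |x/y - th| = eps, so that chi eps eta equals 1 at x/y; the upper bound on |m|
   is exactly what makes the height x of x/y at most B once y is large. *)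

From Stdlib Require Import Reals ZArith.
From Stdlib Require Import Lra Lia List Classical.
Open Scope R_scope.

Lemma pigeonhole {A B : Type} (f : A -> B) (l : list A) (L : list B) :
  NoDup l -> (forall x, In x l -> In (f x) L) -> (length L < length l)%nat ->
  exists x y, In x l /\ In y l /\ x <> y /\ f x = f y.
Proof.
  intros Hl HfL Hlen.
  apply NNPP; intros Hinj.
  assert (Hmap : NoDup (map f l)).
  { apply NoDup_map_NoDup_ForallPairs; [|exact Hl].
    intros x y Hx Hy Hxy. apply NNPP; intros Hne. apply Hinj. now exists x, y. }
  assert (Hincl : incl (map f l) L).
  { intros z Hz. apply in_map_iff in Hz as [x [<- Hx]]. auto. }
  pose proof (NoDup_incl_length Hmap Hincl) as Hle.
  rewrite length_map in Hle. lia.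
Qed.

Lemma Int_part_eq_close (x y : R) : Int_part x = Int_part y -> Rabs (x - y) < 1.
Proof.
  intros E. pose proof (base_Int_part x). pose proof (base_Int_part y).
  rewrite E in *. apply Rabs_def1; lra.
Qed.

Lemma dirichlet_approximation (s : R) (N : nat) : (1 <= N)%nat ->
  exists p q : Z, (1 <= q <= Z.of_nat N)%Z /\ Rabs (IZR q * s - IZR p) < / INR N.
Proof.
  intros HN.
  assert (HNpos : 0 < INR N) by (apply lt_0_INR; lia).
  set (scaled := fun k : nat => INR N * frac_part (INR k * s)).
  set (cell := fun k : nat => Z.to_nat (Int_part (scaled k))).
  assert (Hcell : forall k, (0 <= Int_part (scaled k) < Z.of_nat N)%Z).
  { intros k. pose proof (base_fp (INR k * s)) as [Hf0 Hf1]. pose proof (base_Int_part (scaled k)).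
    assert (0 <= scaled k < INR N).
    { unfold scaled. split; [apply Rmult_le_pos; lra|].
      rewrite <- (Rmult_1_r (INR N)) at 2. apply Rmult_lt_compat_l; lra. }
    assert (Hgt : (-1 < Int_part (scaled k))%Z) by (apply lt_IZR; lra).
    split; [lia | apply lt_IZR; rewrite <- INR_IZR_INZ; lra]. }
  assert (Hclose : forall i j, (i < j <= N)%nat -> cell i = cell j ->
      exists p q : Z, (1 <= q <= Z.of_nat N)%Z /\ Rabs (IZR q * s - IZR p) < / INR N).
  { intros i j Hij Eij.
    exists (Int_part (INR j * s) - Int_part (INR i * s))%Z, (Z.of_nat j - Z.of_nat i)%Z.
    split; [lia|].
    assert (Hsc : Rabs (scaled j - scaled i) < 1).
    { apply Int_part_eq_close. pose proof (Hcell i). pose proof (Hcell j).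
      apply Z2Nat.inj; [lia|lia|]. symmetry. exact Eij. }
    unfold scaled, frac_part in Hsc.
    rewrite <- Rmult_minus_distr_l, Rabs_mult, (Rabs_right (INR N)) in Hsc by lra.
    apply (Rmult_lt_reg_l (INR N)); [exact HNpos|]. rewrite Rinv_r by lra.
    rewrite minus_IZR, minus_IZR, <- !INR_IZR_INZ.
    replace ((INR j - INR i) * s - (IZR (Int_part (INR j * s)) - IZR (Int_part (INR i * s))))
      with (INR j * s - IZR (Int_part (INR j * s)) - (INR i * s - IZR (Int_part (INR i * s))))
      by ring.
    exact Hsc. }
  destruct (pigeonhole cell (seq 0 (S N)) (seq 0 N)) as [i [j [Hi [Hj [Hne E]]]]].
  - apply seq_NoDup.
  - intros k _. apply in_seq. specialize (Hcell k). unfold cell. lia.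
  - rewrite !length_seq. lia.
  - apply in_seq in Hi, Hj.
    destruct (Nat.lt_gt_cases i j) as [[Hlt|Hgt] _]; [exact Hne| |].
    + apply (Hclose i j); [lia|exact E].
    + apply (Hclose j i); [lia|symmetry; exact E].
Qed.

Definition Zrange (lo : Z) (n : nat) : list Z := map (fun k => lo + Z.of_nat k)%Z (seq 0 n).

Lemma in_Zrange (lo z : Z) (n : nat) : (lo <= z < lo + Z.of_nat n)%Z -> In z (Zrange lo n).
Proof.
  intros Hz. apply in_map_iff. exists (Z.to_nat (z - lo)).
  split; [lia|]. apply in_seq. lia.
Qed.

Lemma divide_sub_of_mod_abs_eq (n p p' : Z) :
  n <> 0%Z -> (p mod Z.abs n = p' mod Z.abs n)%Z -> (n | p - p')%Z.
Proof.
  intros Hn E. apply Z.divide_abs_l, Z.mod_divide; [lia|]. now apply Z.cong_iff_0.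
Qed.

(* Two solutions of [p^2 - d q^2 = N] that are congruent mod [N] have a quotient
   [(p + q sqrt d) / (p' + q' sqrt d)] with integer coordinates. *)
Lemma pell_unit_of_congruent_solutions (d p q p' q' N : Z) : N <> 0%Z ->
  (p * p - d * q * q = N)%Z -> (p' * p' - d * q' * q' = N)%Z ->
  (N | p - p')%Z -> (N | q - q')%Z -> (1 <= q)%Z -> (1 <= q')%Z -> (p, q) <> (p', q') ->
  exists X Y, (X * X - d * Y * Y = 1)%Z /\ Y <> 0%Z.
Proof.
  intros HN E E' [u Hu] [v Hv] Hq Hq' Hne.
  assert (HXdiv : (N | p * p' - d * q * q')%Z).
  { exists (1 - p * u + d * q * v)%Z.
    replace p' with (p - u * N)%Z by lia. replace q' with (q - v * N)%Z by lia.
    transitivity ((p * p - d * q * q) + (- p * u + d * q * v) * N)%Z; [ring|].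
    rewrite E. ring. }
  assert (HYdiv : (N | q * p' - p * q')%Z).
  { exists (- q * u + p * v)%Z.
    replace p' with (p - u * N)%Z by lia. replace q' with (q - v * N)%Z by lia. ring. }
  destruct HXdiv as [X HX], HYdiv as [Y HY].
  exists X, Y. split.
  - assert (Hbrahmagupta : ((p * p' - d * q * q') * (p * p' - d * q * q')
        - d * (q * p' - p * q') * (q * p' - p * q')
        = (p * p - d * q * q) * (p' * p' - d * q' * q'))%Z) by ring.
    rewrite HX, HY, E, E' in Hbrahmagupta.
    assert (Hzero : ((X * X - d * Y * Y - 1) * (N * N) = 0)%Z) by lia.
    apply Z.mul_eq_0 in Hzero as [Hzero|Hzero]; [lia|].
    apply Z.mul_eq_0 in Hzero. lia.
  - intros ->.
    assert (Hprop : (q * p' = p * q')%Z) by lia.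
    assert (Hsq : (q * q * N = q' * q' * N)%Z).
    { transitivity (q * q * (p' * p' - d * q' * q'))%Z; [now rewrite E'|].
      transitivity (q' * q' * (p * p - d * q * q))%Z; [|now rewrite E].
      transitivity ((q * p') * (q * p') - d * q * q * q' * q')%Z; [ring|].
      rewrite Hprop. ring. }
    apply Z.mul_cancel_r in Hsq; [|exact HN].
    assert (q = q') by nia. subst q'.
    assert (p = p') by nia. subst p'. now apply Hne.
Qed.

Section PellEquation.

Variable d : Z.
Hypothesis d_pos : (0 < d)%Z.
Hypothesis sqrt_d_irrational : forall p q : Z, (1 <= q)%Z -> IZR q * sqrt (IZR d) <> IZR p.

Let s := sqrt (IZR d).

Definition approx_err (pq : Z * Z) : R := Rabs (IZR (snd pq) * sqrt (IZR d) - IZR (fst pq)).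

Definition good_approx (pq : Z * Z) : Prop :=
  (1 <= snd pq)%Z /\ approx_err pq < / IZR (snd pq).

Definition pell_norm (pq : Z * Z) : Z := (fst pq * fst pq - d * snd pq * snd pq)%Z.

Lemma sqrt_d_pos : 0 < s.
Proof. apply sqrt_lt_R0, IZR_lt, d_pos. Qed.

Lemma sqrt_d_sq : s * s = IZR d.
Proof. apply sqrt_sqrt, IZR_le. lia. Qed.

Lemma approx_err_pos (pq : Z * Z) : (1 <= snd pq)%Z -> 0 < approx_err pq.
Proof.
  intros Hq. apply Rabs_pos_lt. intros E.
  apply (sqrt_d_irrational (fst pq) (snd pq) Hq). lra.
Qed.

Lemma good_approx_within (e : R) : 0 < e -> exists pq, good_approx pq /\ approx_err pq < e.
Proof.
  intros He.
  destruct (INR_unbounded (/ e)) as [N HN].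
  assert (HN1 : (1 <= N)%nat).
  { destruct N; [|lia]. simpl in HN. pose proof (Rinv_0_lt_compat e He). lra. }
  destruct (dirichlet_approximation s N HN1) as [p [q [Hq Hpq]]].
  exists (p, q). unfold good_approx, approx_err; simpl.
  assert (Hq1 : 1 <= IZR q) by (apply IZR_le; lia).
  assert (HqN : IZR q <= INR N) by (rewrite INR_IZR_INZ; apply IZR_le; lia).
  split; [split; [lia|]|].
  - eapply Rlt_le_trans; [exact Hpq|]. apply Rinv_le_contravar; lra.
  - eapply Rlt_trans; [exact Hpq|].
    rewrite <- (Rinv_inv e). apply Rinv_lt_contravar; [|lra].
    apply Rmult_lt_0_compat; [apply Rinv_0_lt_compat|]; lra.
Qed.

Lemma good_approx_list (n : nat) :
  exists l, length l = n /\ NoDup l /\ Forall good_approx l.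
Proof.
  (* Each new approximation is strictly better than all previous ones, hence new. *)
  assert (Hstrong : exists l e, length l = n /\ NoDup l /\ Forall good_approx l /\
                                0 < e /\ Forall (fun pq => e <= approx_err pq) l).
  { induction n as [|n [l [e [Hl [Hnd [Hgood [He Herr]]]]]]].
    - exists nil, 1. repeat constructor; lra.
    - destruct (good_approx_within e He) as [pq [Hpq Hpqe]].
      rewrite Forall_forall in Herr.
      exists (pq :: l), (approx_err pq). repeat split.
      + simpl. lia.
      + constructor; [|exact Hnd]. intros Hin. specialize (Herr pq Hin). lra.
      + constructor; assumption.
      + apply approx_err_pos, Hpq.
      + constructor; [lra|]. apply Forall_forall. intros x Hx. specialize (Herr x Hx). lra. }
  destruct Hstrong as [l [_ [Hl [Hnd [Hgood _]]]]]. now exists l.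
Qed.

Lemma good_approx_norm_bound (pq : Z * Z) :
  good_approx pq -> IZR (Z.abs (pell_norm pq)) < 2 * s + 1.
Proof.
  destruct pq as [p q]. unfold good_approx, approx_err, pell_norm; simpl.
  intros [Hq He]. fold s in He.
  assert (Hq1 : 1 <= IZR q) by (apply IZR_le; lia).
  pose proof sqrt_d_pos. pose proof sqrt_d_sq.
  set (e := Rabs (IZR q * s - IZR p)) in He.
  assert (He0 : 0 <= e) by apply Rabs_pos.
  assert (Heq : e * IZR q < 1).
  { apply (Rmult_lt_compat_r (IZR q)) in He; [|lra]. rewrite Rinv_l in He; lra. }
  assert (Hsum : Rabs (IZR p + IZR q * s) <= e + 2 * (IZR q * s)).
  { replace (IZR p + IZR q * s) with (- (IZR q * s - IZR p) + 2 * (IZR q * s)) by ring.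
    eapply Rle_trans; [apply Rabs_triang|]. rewrite Rabs_Ropp, (Rabs_right (2 * _)) by nra.
    unfold e. lra. }
  rewrite abs_IZR, minus_IZR, !mult_IZR.
  replace (IZR p * IZR p - IZR d * IZR q * IZR q)
    with (- (IZR q * s - IZR p) * (IZR p + IZR q * s)) by (rewrite <- sqrt_d_sq; fold s; ring).
  rewrite Rabs_mult, Rabs_Ropp. fold e.
  apply Rle_lt_trans with (e * (e + 2 * (IZR q * s))); [apply Rmult_le_compat_l; lra|].
  nra.
Qed.

Lemma pell_norm_neq0 (pq : Z * Z) : (1 <= snd pq)%Z -> pell_norm pq <> 0%Z.
Proof.
  destruct pq as [p q]. unfold pell_norm; simpl. intros Hq E.
  assert (E' : IZR p * IZR p = IZR q * IZR q * (s * s)).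
  { rewrite sqrt_d_sq, <- !mult_IZR. f_equal. lia. }
  pose proof sqrt_d_pos. assert (Hq1 : 1 <= IZR q) by (apply IZR_le; lia).
  apply (sqrt_d_irrational (Z.abs p) q Hq). fold s. rewrite abs_IZR.
  assert (Hsq : Rsqr (IZR q * s) = Rsqr (Rabs (IZR p))).
  { rewrite <- Rsqr_abs. unfold Rsqr. lra. }
  apply Rsqr_inj in Hsq; [exact Hsq| |apply Rabs_pos]. nra.
Qed.

Theorem pell_nontrivial_solution : exists X Y, (X * X - d * Y * Y = 1)%Z /\ Y <> 0%Z.
Proof.
  set (C := up (2 * s + 1)).
  assert (HC : 2 * s + 1 < IZR C) by (destruct (archimed (2 * s + 1)); unfold C; lra).
  assert (HC1 : (1 <= C)%Z) by (apply le_IZR; pose proof sqrt_d_pos; lra).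
  set (n := Z.to_nat C).
  set (cls := fun pq : Z * Z =>
    (pell_norm pq, (fst pq mod Z.abs (pell_norm pq), snd pq mod Z.abs (pell_norm pq)))%Z).
  set (classes := list_prod (Zrange (- C) (2 * n + 1)) (list_prod (Zrange 0 n) (Zrange 0 n))).
  assert (Hcls : forall pq, good_approx pq -> pell_norm pq <> 0%Z /\ In (cls pq) classes).
  { intros pq Hpq.
    assert (Hnz : pell_norm pq <> 0%Z) by (apply pell_norm_neq0, Hpq).
    assert (Hb : (Z.abs (pell_norm pq) < C)%Z)
      by (apply lt_IZR; pose proof (good_approx_norm_bound pq Hpq); lra).
    pose proof (Z.mod_pos_bound (fst pq) (Z.abs (pell_norm pq)) ltac:(lia)).
    pose proof (Z.mod_pos_bound (snd pq) (Z.abs (pell_norm pq)) ltac:(lia)).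
    split; [exact Hnz|]. unfold cls, n. clearbody C.
    apply in_prod; [|apply in_prod]; apply in_Zrange.
    - lia.
    - lia.
    - lia. }
  destruct (good_approx_list (S (length classes))) as [l [Hl [Hnd Hgood]]].
  rewrite Forall_forall in Hgood.
  destruct (pigeonhole cls l classes Hnd) as [[p q] [[p' q'] [Hin [Hin' [Hne E]]]]].
  - intros pq Hpq. apply Hcls, Hgood, Hpq.
  - lia.
  - pose proof (Hgood _ Hin) as Hg. pose proof (Hgood _ Hin') as Hg'.
    destruct (Hcls _ Hg) as [Hnz _].
    unfold cls in E; simpl in E. injection E as EN Ep Eq.
    apply (pell_unit_of_congruent_solutions d p q p' q' (pell_norm (p, q))); auto.
    + apply divide_sub_of_mod_abs_eq; [exact Hnz|]. now rewrite Ep, EN.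
    + apply divide_sub_of_mod_abs_eq; [exact Hnz|]. now rewrite Eq, EN.
    + apply Hg.
    + apply Hg'.
Qed.

End PellEquation.

Lemma pell_positive_solution (d : Z) : (0 < d)%Z ->
  (forall p q : Z, (1 <= q)%Z -> IZR q * sqrt (IZR d) <> IZR p) ->
  exists X Y, (2 <= X)%Z /\ (1 <= Y)%Z /\ (X * X - d * Y * Y = 1)%Z.
Proof.
  intros Hd Hirr.
  destruct (pell_nontrivial_solution d Hd Hirr) as [X [Y [HXY HY]]].
  exists (Z.abs X), (Z.abs Y).
  assert (HXY' : (Z.abs X * Z.abs X - d * Z.abs Y * Z.abs Y = 1)%Z).
  { rewrite <- Z.mul_assoc, <- !Z.abs_mul, !Z.abs_eq by nia. lia. }
  repeat split; [|lia|exact HXY'].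
  assert (1 <= Z.abs Y * Z.abs Y)%Z by nia. nia.
Qed.

Lemma sqrt_mul_as_ratio (a b : R) : 0 < a -> 0 <= b -> sqrt (a * b) = a * sqrt (b / a).
Proof.
  intros Ha Hb. rewrite <- (sqrt_square a) at 2 by lra.
  rewrite <- sqrt_mult; [| nra | apply Rmult_le_pos; [lra | apply Rlt_le, Rinv_0_lt_compat, Ha]].
  f_equal. field. lra.
Qed.

Lemma sqrt_mul_irrational (a b : Z) : (0 < a)%Z -> (0 < b)%Z ->
  (forall p q : Z, q <> 0%Z -> sqrt (IZR b / IZR a) <> IZR p / IZR q) ->
  forall p q : Z, (1 <= q)%Z -> IZR q * sqrt (IZR (a * b)) <> IZR p.
Proof.
  intros Ha Hb Hirr p q Hq E.
  assert (Ra : 0 < IZR a) by (apply IZR_lt; lia).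
  assert (Rq : 1 <= IZR q) by (apply IZR_le; lia).
  apply (Hirr p (a * q)%Z); [lia|].
  rewrite mult_IZR, sqrt_mul_as_ratio in E; [|exact Ra | apply IZR_le; lia].
  rewrite mult_IZR, <- E. field. lra.
Qed.

Section PellOrbit.

Variables a b X Y : Z.
Hypothesis a_ge1 : (1 <= a)%Z.
Hypothesis b_ge0 : (0 <= b)%Z.
Hypothesis X_ge2 : (2 <= X)%Z.
Hypothesis Y_ge1 : (1 <= Y)%Z.
Hypothesis pell_XY : (X * X - a * b * Y * Y = 1)%Z.

(* Multiplication of [x sqrt a + y sqrt b] by the unit [X + Y sqrt (a b)]. *)
Definition pell_step (xy : Z * Z) : Z * Z :=
  (X * fst xy + b * Y * snd xy, a * Y * fst xy + X * snd xy)%Z.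

Definition pell_orbit (x0 y0 : Z) (n : nat) : Z * Z := Nat.iter n pell_step (x0, y0).

Lemma pell_step_form (xy : Z * Z) :
  let (x', y') := pell_step xy in
  (a * x' * x' - b * y' * y' = a * fst xy * fst xy - b * snd xy * snd xy)%Z.
Proof.
  destruct xy as [x y]; simpl.
  transitivity ((a * x * x - b * y * y) * (X * X - a * b * Y * Y))%Z; [ring|].
  rewrite pell_XY. ring.
Qed.

Lemma pell_step_coprime (xy : Z * Z) :
  Z.gcd (fst xy) (snd xy) = 1%Z -> Z.gcd (fst (pell_step xy)) (snd (pell_step xy)) = 1%Z.
Proof.
  destruct xy as [x y]; simpl. intros Hxy.
  set (x' := (X * x + b * Y * y)%Z). set (y' := (a * Y * x + X * y)%Z).
  set (g := Z.gcd x' y').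
  assert (Hx' : (g | x')%Z) by apply Z.gcd_divide_l.
  assert (Hy' : (g | y')%Z) by apply Z.gcd_divide_r.
  (* The step is inverted by the conjugate unit [X - Y sqrt (a b)]. *)
  assert (Hx : x = (X * x' - b * Y * y')%Z).
  { unfold x', y'. transitivity ((X * X - a * b * Y * Y) * x)%Z; [rewrite pell_XY|]; ring. }
  assert (Hy : y = (X * y' - a * Y * x')%Z).
  { unfold x', y'. transitivity ((X * X - a * b * Y * Y) * y)%Z; [rewrite pell_XY|]; ring. }
  assert (Hg1 : (g | 1)%Z).
  { rewrite <- Hxy. apply Z.gcd_greatest; [rewrite Hx | rewrite Hy];
      apply Z.divide_sub_r; apply Z.divide_mul_r; assumption. }
  apply Z.divide_1_r_nonneg; [apply Z.gcd_nonneg | exact Hg1].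
Qed.

Lemma pell_step_grows (xy : Z * Z) :
  (0 <= fst xy)%Z -> (0 <= snd xy)%Z -> (1 <= fst xy + snd xy)%Z ->
  (0 <= fst (pell_step xy))%Z /\ (snd xy + 1 <= snd (pell_step xy))%Z.
Proof.
  destruct xy as [x y]; simpl; intros Hx Hy Hs.
  assert (0 <= b * Y * y)%Z by (apply Z.mul_nonneg_nonneg; lia).
  assert (x <= a * Y * x)%Z.
  { rewrite <- (Z.mul_1_l x) at 1. apply Z.mul_le_mono_nonneg_r; nia. }
  assert (2 * y <= X * y)%Z by (apply Z.mul_le_mono_nonneg_r; lia).
  split; nia.
Qed.

Lemma pell_orbit_spec (x0 y0 : Z) :
  (0 <= x0)%Z -> (0 <= y0)%Z -> (1 <= x0 + y0)%Z -> Z.gcd x0 y0 = 1%Z ->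
  forall n, let (x, y) := pell_orbit x0 y0 n in
  (0 <= x)%Z /\ (Z.of_nat n <= y)%Z /\ (1 <= x + y)%Z /\ Z.gcd x y = 1%Z /\
  (a * x * x - b * y * y = a * x0 * x0 - b * y0 * y0)%Z.
Proof.
  intros Hx0 Hy0 Hs0 Hg0 n. induction n as [|n IH]; [simpl; lia|].
  unfold pell_orbit in *. rewrite Nat.iter_succ.
  destruct (Nat.iter n pell_step (x0, y0)) as [x y] eqn:Exy.
  destruct IH as [Hx [Hy [Hs [Hg Hf]]]].
  pose proof (pell_step_form (x, y)) as Hf'.
  pose proof (pell_step_coprime (x, y) Hg) as Hg'.
  pose proof (pell_step_grows (x, y) Hx ltac:(simpl; lia) Hs) as [Hx' Hy'].
  destruct (pell_step (x, y)) as [x' y']; simpl in *.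
  repeat split; lia.
Qed.

End PellOrbit.

Lemma abs_primitive_solution (a b m x y : Z) :
  Z.gcd x y = 1%Z -> (a * x ^ 2 - b * y ^ 2)%Z = m ->
  (a * Z.abs x * Z.abs x - b * Z.abs y * Z.abs y = m)%Z /\
  (1 <= Z.abs x + Z.abs y)%Z /\ Z.gcd (Z.abs x) (Z.abs y) = 1%Z.
Proof.
  intros Hxy Hm. repeat split.
  - rewrite <- Hm, <- !Z.mul_assoc, <- !Z.abs_mul, !Z.abs_eq by nia. ring.
  - destruct (Z.eq_dec x 0) as [->|]; [|lia]. rewrite Z.gcd_0_l in Hxy. lia.
  - now rewrite Z.gcd_abs_l, Z.gcd_abs_r.
Qed.

Lemma hyperbola_of_form (a b m x y : Z) : (0 < a)%Z -> (0 < b)%Z ->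
  (a * x * x - b * y * y = m)%Z ->
  let th := sqrt (IZR b / IZR a) in
  Rabs ((IZR x - th * IZR y) * (IZR x + th * IZR y)) = IZR (Z.abs m) / IZR a.
Proof.
  intros Ha Hb Hm th.
  assert (Ra : 0 < IZR a) by (apply IZR_lt; lia).
  assert (Hth2 : th * th = IZR b / IZR a)
    by (apply sqrt_sqrt, Rlt_le, Rdiv_lt_0_compat; [apply IZR_lt; lia|lra]).
  replace ((IZR x - th * IZR y) * (IZR x + th * IZR y)) with (IZR m / IZR a).
  - unfold Rdiv. rewrite Rabs_mult, Rabs_inv, abs_IZR, (Rabs_right (IZR a)) by lra.
    reflexivity.
  - rewrite <- Hm, minus_IZR, !mult_IZR.
    transitivity (IZR x * IZR x - th * th * (IZR y * IZR y)); [|ring].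
    rewrite Hth2. field. lra.
Qed.

Lemma hyperbola_point_height_bound (th mu eps x y : R) :
  1 < th -> 0 <= mu -> th * mu < 2 * eps -> 0 <= x -> 1 <= y ->
  Rabs ((x - th * y) * (x + th * y)) = mu ->
  mu <= (th - 1) * y -> mu * (eps + 2 * th * mu + mu * mu) <= th * (2 * eps - th * mu) * y ->
  y <= x /\ x * x * Rabs (x - th * y) <= eps * y.
Proof.
  intros Hth Hmu Hmueps Hx Hy Hnorm Hy1 Hy2.
  set (D := x - th * y) in *. set (S := x + th * y) in *.
  assert (Hx_eq : x = th * y + D) by (unfold D; ring).
  assert (HS : y <= S) by (unfold S; nra).
  rewrite Rabs_mult, (Rabs_right S) in Hnorm by lra.
  assert (HDy : Rabs D * y <= mu) by (rewrite <- Hnorm; apply Rmult_le_compat_l; [apply Rabs_pos|lra]).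
  assert (HD : Rabs D <= mu) by nra.
  assert (HDbounds : - mu <= D <= mu) by (revert HD; split_Rabs; lra).
  split; [nra|].
  (* Compare [x^2 |D| S = x^2 mu] with [eps y S]: their difference is at least
     [th (2 eps - th mu) y^2 - mu (eps + 2 th mu + mu^2)]. *)
  assert (Hdiff : eps * y * S - x * x * mu
                  = th * (2 * eps - th * mu) * y * y + D * y * (eps - 2 * th * mu) - D * D * mu)
    by (unfold S; rewrite Hx_eq; ring).
  assert (Hlin : Rabs (D * y * (eps - 2 * th * mu)) <= mu * (eps + 2 * th * mu)).
  { rewrite !Rabs_mult, (Rabs_right y) by lra.
    apply Rmult_le_compat; try apply Rmult_le_pos; try apply Rabs_pos; try lra.
    apply Rabs_le. nra. }
  assert (Hquad : D * D * mu <= mu * mu * mu).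
  { apply Rmult_le_compat_r; [lra|]. nra. }
  assert (Hmain : x * x * mu <= eps * y * S).
  { pose proof (Rle_abs (- (D * y * (eps - 2 * th * mu)))) as Habs. rewrite Rabs_Ropp in Habs.
    assert (Hc : 0 <= th * (2 * eps - th * mu) * y) by (repeat apply Rmult_le_pos; lra).
    assert (0 <= th * (2 * eps - th * mu) * y * (y - 1)) by (apply Rmult_le_pos; lra).
    lra. }
  apply (Rmult_le_reg_r S); [lra|]. rewrite <- Hnorm in Hmain. nra.
Qed.

Lemma eventually_le_linear (alpha beta : R) : 0 < beta ->
  exists N : nat, forall y, INR N <= y -> alpha <= beta * y.
Proof.
  intros Hbeta. destruct (INR_unbounded (alpha / beta)) as [N HN].
  exists N. intros y Hy.
  apply (Rmult_le_reg_l (/ beta)); [apply Rinv_0_lt_compat, Hbeta|].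
  rewrite <- Rmult_assoc, Rinv_l, Rmult_1_l by lra.
  unfold Rdiv in HN. lra.
Qed.

Lemma fold_right_Rplus_ge_member {A : Type} (g : A -> R) (l : list A) (x : A) :
  (forall z, 0 <= g z) -> In x l -> g x <= fold_right Rplus 0 (map g l).
Proof.
  intros Hg Hx. induction l as [|h t IH]; [contradiction|]. simpl.
  assert (Ht : 0 <= fold_right Rplus 0 (map g t)).
  { clear IH Hx. induction t as [|h' t' IHt]; simpl; [lra|]. pose proof (Hg h'). lra. }
  destruct Hx as [->|Hx]; [lra|]. pose proof (IH Hx). pose proof (Hg h). lra.
Qed.

Lemma in_rat_points (x y : Z) (B : R) :
  (1 <= y <= x)%Z -> Z.gcd x y = 1%Z -> IZR x <= B -> In (x, y) (rat_points B).
Proof.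
  intros Hxy Hg HB. unfold rat_points. apply filter_In. split.
  - assert (HK : (x < up B)%Z) by (apply lt_IZR; destruct (archimed B); lra).
    unfold box. apply in_prod; apply in_map_iff.
    + exists (x + up B)%Z. split; [ring|].
      apply in_map_iff. exists (Z.to_nat (x + up B)). split; [apply Z2Nat.id; lia|].
      apply in_seq. lia.
    + exists (y - 1)%Z. split; [ring|].
      apply in_map_iff. exists (Z.to_nat (y - 1)). split; [apply Z2Nat.id; lia|].
      apply in_seq. lia.
  - simpl. rewrite Hg. simpl.
    destruct (Rle_dec (height x y) B) as [_|Hnot]; [reflexivity|]. exfalso. apply Hnot.
    unfold height. rewrite !Z.abs_eq by lia.
    apply Rmax_lub; [exact HB|]. apply Rle_trans with (IZR x); [apply IZR_le; lia|exact HB].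
Qed.

Lemma chi_nonneg (eps eta t : R) : 0 <= chi eps eta t.
Proof. unfold chi. destruct (Rlt_dec _ _); [destruct (Rle_dec _ _)|]; lra. Qed.

Lemma chi_at_eps (eps eta t : R) : eta < eps -> Rabs t = eps -> chi eps eta t = 1.
Proof.
  intros Hlt Ht. unfold chi. rewrite Ht.
  destruct (Rlt_dec eta eps); [|lra]. destruct (Rle_dec eps eps); lra.
Qed.

(* The [B] with [B^2 |x/y - th| = eps]: at this height [x/y] lies on the outer edge of
   the annulus cut out by [chi eps eta]. *)
Definition critical_height (th eps x y : R) : R := sqrt (eps * y / Rabs (x - th * y)).

Lemma delta_critical_height (th eps eta : R) (x y : Z) :
  0 < eta < eps -> (1 <= y <= x)%Z -> Z.gcd x y = 1%Z -> IZR x - th * IZR y <> 0 ->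
  IZR x * IZR x * Rabs (IZR x - th * IZR y) <= eps * IZR y ->
  let B := critical_height th eps (IZR x) (IZR y) in
  0 < B /\ IZR x <= B /\ 1 <= delta th B (1 / 2) (chi eps eta).
Proof.
  intros Heps Hxy Hg HD Hineq B.
  assert (Hy : 1 <= IZR y) by (apply IZR_le; lia).
  assert (Hx : 0 <= IZR x) by (apply IZR_le; lia).
  set (A := Rabs (IZR x - th * IZR y)) in *.
  assert (HA : 0 < A) by (apply Rabs_pos_lt, HD).
  assert (HB2 : 0 < eps * IZR y / A) by (apply Rdiv_lt_0_compat; nra).
  assert (HBpos : 0 < B) by (apply sqrt_lt_R0, HB2).
  assert (HxB : IZR x <= B).
  { unfold B, critical_height. fold A.
    rewrite <- (sqrt_square (IZR x)) by lra. apply sqrt_le_1_alt.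
    apply (Rmult_le_reg_r A); [exact HA|].
    replace (eps * IZR y / A * A) with (eps * IZR y) by (field; lra). exact Hineq. }
  repeat split; [exact HBpos|exact HxB|].
  unfold delta.
  eapply Rle_trans; [|apply (fold_right_Rplus_ge_member _ _ (x, y))].
  - simpl. apply Req_le. symmetry. apply chi_at_eps; [lra|].
    replace (1 / (1 / 2)) with (INR 2) by (simpl; field).
    rewrite Rpower_pow by lra.
    unfold B, critical_height. fold A. rewrite pow2_sqrt by lra.
    replace (eps * IZR y / A * (IZR x / IZR y - th)) with (eps * ((IZR x - th * IZR y) / A))
      by (field; lra).
    unfold Rdiv. rewrite !Rabs_mult, Rabs_inv, (Rabs_right eps) by lra.
    fold A. rewrite (Rabs_right A) by lra. field. lra.
  - intros z. apply chi_nonneg.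
  - apply in_rat_points; [lia|exact Hg|exact HxB].
Qed.

Lemma delta_large_on_far_solutions (a b m : Z) (eps eta : R) :
  let th := sqrt (IZR b / IZR a) in
  (0 < a)%Z -> (0 < b)%Z -> 1 < th ->
  (forall p q : Z, q <> 0%Z -> th <> IZR p / IZR q) ->
  0 < eta < eps -> th * (IZR (Z.abs m) / IZR a) < 2 * eps ->
  exists N : nat, forall x y : Z, (0 <= x)%Z -> INR N <= IZR y -> Z.gcd x y = 1%Z ->
    (a * x * x - b * y * y = m)%Z ->
    let B := critical_height th eps (IZR x) (IZR y) in
    0 < B /\ IZR y <= B /\ 1 <= delta th B (1 / 2) (chi eps eta).
Proof.
  intros th Ha Hb Hth Hirr Heps Hmu_eps.
  set (mu := IZR (Z.abs m) / IZR a) in *.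
  assert (Hmu : 0 <= mu)
    by (apply Rmult_le_pos; [apply IZR_le; lia | apply Rlt_le, Rinv_0_lt_compat, IZR_lt; lia]).
  destruct (eventually_le_linear mu (th - 1) ltac:(lra)) as [N1 HN1].
  destruct (eventually_le_linear (mu * (eps + 2 * th * mu + mu * mu)) (th * (2 * eps - th * mu))
              ltac:(apply Rmult_lt_0_compat; lra)) as [N2 HN2].
  exists (S (max N1 N2)). intros x y Hx Hy Hxy Hform B.
  rewrite S_INR in Hy. pose proof (pos_INR (max N1 N2)).
  pose proof (le_INR _ _ (Nat.le_max_l N1 N2)). pose proof (le_INR _ _ (Nat.le_max_r N1 N2)).
  assert (Hy1 : (1 <= y)%Z) by (apply le_IZR; lra).
  destruct (hyperbola_point_height_bound th mu eps (IZR x) (IZR y) Hth Hmu Hmu_eps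
              (IZR_le _ _ Hx) ltac:(lra) (hyperbola_of_form a b m x y Ha Hb Hform)
              (HN1 (IZR y) ltac:(lra)) (HN2 (IZR y) ltac:(lra))) as [Hyx Hheight].
  assert (HD : IZR x - th * IZR y <> 0).
  { intros E. apply (Hirr x y); [lia|].
    replace (IZR x) with (th * IZR y) by lra. field. lra. }
  destruct (delta_critical_height th eps eta x y Heps ltac:(split; [lia|apply le_IZR, Hyx])
              Hxy HD Hheight) as [HB [HxB Hdelta]].
  repeat split; [exact HB|apply (Rle_trans _ _ _ Hyx HxB)|exact Hdelta].
Qed.

Lemma norm_bound_rescaled (a b n eps : R) : 0 < a -> 0 <= b -> 0 < sqrt (b / a) ->
  n < 2 * sqrt (a * b) * / sqrt (b / a) ^ 2 * eps -> sqrt (b / a) * (n / a) < 2 * eps.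
Proof.
  intros Ha Hb Hth Hn. rewrite sqrt_mul_as_ratio in Hn by assumption.
  set (th := sqrt (b / a)) in *.
  apply (Rmult_lt_reg_r (a / th)); [apply Rdiv_lt_0_compat; lra|].
  replace (th * (n / a) * (a / th)) with n by (field; lra).
  replace (2 * eps * (a / th)) with (2 * (a * th) * / th ^ 2 * eps) by (field; lra).
  exact Hn.
Qed.

Lemma cv_infty_of_INR_le (u : nat -> R) : (forall n, INR n <= u n) -> cv_infty u.
Proof.
  intros Hu M. destruct (INR_unbounded M) as [N HN].
  exists N. intros n Hn. pose proof (Hu n). pose proof (le_INR _ _ Hn). lra.
Qed.

Theorem mainTheorem8 (a b : Z) (eps eta : R) :
  (0 < a)%Z -> (0 < b)%Z -> Z.gcd a b = 1%Z ->
  1 < sqrt (IZR b / IZR a) ->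
  (forall p q : Z, q <> 0%Z -> sqrt (IZR b / IZR a) <> IZR p / IZR q) ->
  0 < eta -> eta < eps ->
  (exists m x y : Z,
      Z.gcd x y = 1%Z /\ (a * x ^ 2 - b * y ^ 2)%Z = m /\
      2 * sqrt (IZR a * IZR b) * / (sqrt (IZR b / IZR a)) ^ 2 * eta < IZR (Z.abs m) /\
      IZR (Z.abs m) < 2 * sqrt (IZR a * IZR b) * / (sqrt (IZR b / IZR a)) ^ 2 * eps) ->
  exists Bn : nat -> R,
    cv_infty Bn /\
    forall n : nat, (1 <= n)%nat ->
      0 < Bn n /\ 1 <= delta (sqrt (IZR b / IZR a)) (Bn n) (1 / 2) (chi eps eta).
Proof.
  intros Ha Hb _ Hth Hirr Heta Heps [m [x0 [y0 [Hcop [Hm [_ Hupper]]]]]].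
  set (th := sqrt (IZR b / IZR a)) in *.
  assert (Ra : 0 < IZR a) by (apply IZR_lt; lia).
  assert (Hmu_eps : th * (IZR (Z.abs m) / IZR a) < 2 * eps)
    by (apply norm_bound_rescaled; [exact Ra | apply IZR_le; lia | fold th; lra | exact Hupper]).
  destruct (delta_large_on_far_solutions a b m eps eta Ha Hb Hth Hirr ltac:(lra) Hmu_eps)
    as [N HN].
  destruct (pell_positive_solution (a * b) ltac:(nia) (sqrt_mul_irrational a b Ha Hb Hirr))
    as [X [Y [HX [HY HXY]]]].
  destruct (abs_primitive_solution a b m x0 y0 Hcop Hm) as [Hstart [Hstart1 Hstart_cop]].
  set (P := fun n => pell_orbit a b X Y (Z.abs x0) (Z.abs y0) (n + N)).
  set (Bn := fun n => critical_height th eps (IZR (fst (P n))) (IZR (snd (P n)))).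
  assert (Hgood : forall n, INR n <= Bn n /\ 0 < Bn n /\ 1 <= delta th (Bn n) (1 / 2) (chi eps eta)).
  { intros n. unfold Bn, P.
    pose proof (pell_orbit_spec a b X Y ltac:(lia) ltac:(lia) HX HY ltac:(lia)
                  (Z.abs x0) (Z.abs y0) ltac:(lia) ltac:(lia) Hstart1 Hstart_cop (n + N)) as Horbit.
    destruct (pell_orbit _ _ _ _ _ _ _) as [x y]; simpl.
    destruct Horbit as [Hx [Hy [_ [Hxy Hform]]]]. rewrite Hstart in Hform.
    assert (Hy' : INR n + INR N <= IZR y) by (rewrite <- plus_INR, INR_IZR_INZ; apply IZR_le, Hy).
    pose proof (pos_INR n). pose proof (pos_INR N).
    destruct (HN x y Hx ltac:(lra) Hxy Hform) as [HB [HyB Hdelta]].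
    repeat split; [apply (Rle_trans _ (IZR y)); [lra|exact HyB] | exact HB | exact Hdelta]. }
  exists Bn. split.
  - apply cv_infty_of_INR_le. intros n. apply Hgood.
  - intros n _. split; apply Hgood.
Qed.
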